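(* Consider the discrete first-price auction in the model with ties with $n=2$ bidders whose values are drawn independently and uniformly from $X=\{0,1,\dots,x\}$. There is no symmetric equilibrium $\beta$ with a value $v\in X$, $v\ge1$, and an integer $k\ge2$ such that $\beta(v-1)=\beta(v)-k$ and $\beta(v)\ge(2-\sqrt3)\,v$.
   Context: Model. Two risk-neutral bidders compete for one indivisible object. Values and bids lie in $X=\{0,1,2,\dots,x\}$; each bidder's value is drawn independently and uniformly from $X$. A (pure) strategy is a bidding function $\beta:X\to X$. In the model with ties, the higher bidder wins and, if the two bids are equal, each wins with probability $1/2$. In the first-price auction, a bidder with value $v_i$ bidding $b_i$ gets expected payoff $(v_i-b_i)\Pr(i\text{ wins})$. An equilibrium is a profile of bidding functions such that each bidder's bidding function maximises their expected payoff given the other's (a pure-strategy Bayes–Nash equilibrium) and such that no bidder uses a weakly dominated bidding function (a bidding function is weakly dominated if some other bidding function yields at least as high expected payoff against every opponent bidding function, and strictly higher against some). A symmetric equilibrium is an equilibrium in which both bidders use the same bidding function. *)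

From HB Require Import structures.
From mathcomp Require Import all_boot all_order all_algebra.
Set Implicit Arguments. Unset Strict Implicit. Unset Printing Implicit Defensive.
Import Order.TTheory GRing.Theory Num.Theory.
Local Open Scope ring_scope.

(* Values and bids range over X = {0,...,x}, represented by 'I_x.+1.
   A (pure) bidding function is a map X -> X. *)
Definition bidfun (x : nat) := 'I_x.+1 -> 'I_x.+1.

Definition win_prob (R : rcfType) (x : nat) (sigma : bidfun x) (b : 'I_x.+1) : R :=
  (\sum_(w < x.+1)
     (if (sigma w < b)%N then 1 else if sigma w == b then 2^-1 else 0))
  / x.+1%:R.

Definition payoff (R : rcfType) (x : nat) (v b : 'I_x.+1) (sigma : bidfun x) : R :=
  ((v : nat)%:R - (b : nat)%:R) * win_prob R sigma b.

Definition exp_payoff (R : rcfType) (x : nat) (beta sigma : bidfun x) : R :=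
  \sum_(v < x.+1) payoff R v (beta v) sigma / x.+1%:R.

Definition best_response (R : rcfType) (x : nat) (beta sigma : bidfun x) : Prop :=
  forall gamma : bidfun x, exp_payoff R gamma sigma <= exp_payoff R beta sigma.

Definition weakly_dominated (R : rcfType) (x : nat) (beta : bidfun x) : Prop :=
  exists gamma : bidfun x,
    (forall sigma : bidfun x, exp_payoff R beta sigma <= exp_payoff R gamma sigma) /\
    (exists sigma : bidfun x, exp_payoff R beta sigma < exp_payoff R gamma sigma).

Definition equilibrium (R : rcfType) (x : nat) (beta1 beta2 : bidfun x) : Prop :=
  [/\ best_response R beta1 beta2, best_response R beta2 beta1,
      ~ weakly_dominated R beta1 & ~ weakly_dominated R beta2].

Definition symmetric_equilibrium (R : rcfType) (x : nat) (beta : bidfun x) : Prop :=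
  equilibrium R beta beta.

From HB Require Import structures.
From mathcomp Require Import all_boot all_order all_algebra.
From mathcomp Require Import zify.
Set Implicit Arguments. Unset Strict Implicit. Unset Printing Implicit Defensive.
Import Order.TTheory GRing.Theory Num.Theory.
Local Open Scope ring_scope.

(* We prove more than stated: in ANY symmetric best-response profile a bidding
   function never jumps by k >= 2 between consecutive values v-1 and v.

   Let wins2 d = 2 (x+1) win_prob d, the integer counting the opponent's values
   beaten (weight 2) or tied (weight 1) by the bid d.  Optimality of beta
   against itself gives, for every value u and bid d, the integer incentive
   constraint (u - d) wins2 d <= (u - beta u) wins2 (beta u)
   (best_response_incentive); two such constraints force beta to be monotone.
   Monotonicity splits the values at a jump c = beta(v-1) < b = beta v into
   "values < v bid <= c" and "values >= v bid >= b", and in this gap situation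
   wins2 is computed from v and the numbers q, p of values bidding c and b
   (Section Gap).  Four deviations (v to b-1, the last value bidding b to b+1,
   v-1 to c+1, v to c) then yield incentive constraints that no integers
   satisfy (jump_incentives_inconsistent): they force p = 3, v = 3b, q <= 2
   and c = 0, while a zero bid c forces q = v. *)

(* If the deviation to b-1 earns weight 2v while the bid b earns 2v + p, then
   b < v: at b >= v the bid b yields a non-positive payoff, b-1 a positive one. *)
Lemma bid_below_value (v b p : int) :
  1 <= v -> 0 <= p -> (v - (b - 1)) * (2 * v) <= (v - b) * (2 * v + p) -> b < v.
Proof. by move=> v_ge1 p_ge0 down; nia. Qed.

(* Here p, q count the values bidding b, c; t is the largest value bidding b;
   g >= 2v + 2p and gc = 2v - q are the weights of the bids b+1 and c. *)
Lemma jump_incentives_inconsistent (v b c p q t g gc : int) :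
  0 <= c -> c + 2 <= b -> b < v -> 1 <= p -> 1 <= q -> (c = 0 -> q = v) ->
  v + p <= t + 1 -> gc + q = 2 * v -> 2 * v + 2 * p <= g ->
  (v - (b - 1)) * (2 * v) <= (v - b) * (2 * v + p) ->
  (t - (b + 1)) * g <= (t - b) * (2 * v + p) ->
  (v - 1 - (c + 1)) * (2 * v) <= (v - 1 - c) * gc ->
  (v - c) * gc <= (v - b) * (2 * v + p) -> False.
Proof.
move=> c_ge0 gap b_lt_v p_ge1 q_ge1 c0_q t_ge e_gc g_ge down up low drop.
have win_v : 2 * v <= p * (v - b) by nia.
have win_t : p * (t - b) <= 2 * v + 2 * p.
  have t_gap : 0 <= t - b - 1 by lia.
  by have := ler_wpM2l t_gap g_ge; nia.
have p3 : p = 3.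
  have : 3 <= p by nia.
  have : p <= 3 by nia.
  by lia.
subst p.
have v3b : v = 3 * b by lia.
subst v.
have q_le2 : q <= 2 by nia.
have c0 : c = 0 by nia.
by have := c0_q c0; lia.
Qed.

Lemma count_below (n v : nat) : (\sum_(w < n) ((w < v)%N : nat))%N = minn v n.
Proof.
elim: n => [|n IHn]; first by rewrite big_ord0; lia.
by rewrite big_ord_recr /= IHn; case: (ltnP n v) => /=; lia.
Qed.

Section WinningWeight.
Variables (x : nat) (sigma : bidfun x).

Definition win_weight (b w : 'I_x.+1) : nat :=
  if (sigma w < b)%N then 2 else if sigma w == b then 1 else 0.

Definition wins2 (b : 'I_x.+1) : nat := (\sum_(w < x.+1) win_weight b w)%N.

Definition ties (b : 'I_x.+1) : nat := (\sum_(w < x.+1) (sigma w == b : nat))%N.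

Lemma win_probE (R : rcfType) (b : 'I_x.+1) :
  win_prob R sigma b = (wins2 b)%:R / 2 / x.+1%:R.
Proof.
rewrite /win_prob /wins2 natr_sum; congr (_ / _); rewrite mulr_suml.
apply: eq_bigr => w _; rewrite /win_weight.
case: ifP => _; first by rewrite divff // pnatr_eq0.
by case: ifP => _; rewrite ?mul1r ?mul0r.
Qed.

Lemma wins2_lt_of_used (c c' w : 'I_x.+1) :
  (c' < c)%N -> sigma w = c' -> (wins2 c' < wins2 c)%N.
Proof.
move=> c'_lt_c bid_w; rewrite /wins2 (bigD1 w) //= [X in (_ < X)%N](bigD1 w) //=.
rewrite -addSn leq_add //; first by rewrite /win_weight bid_w ltnn eqxx c'_lt_c.
apply: leq_sum => i _; rewrite /win_weight.
case: ifP => [lt_c' | _]; first by rewrite (ltn_trans lt_c' c'_lt_c).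
by case: ifP => // /eqP ->; rewrite c'_lt_c.
Qed.

(* Nobody bids below 0, so the zero bid only ties. *)
Lemma wins2_zero (b : 'I_x.+1) : (b : nat) = 0%N -> wins2 b = ties b.
Proof.
move=> b0; apply: eq_bigr => w _; rewrite /win_weight b0 ltn0.
by case: (_ == _).
Qed.

Lemma best_response_incentive (R : rcfType) (beta : bidfun x) :
  best_response R beta sigma -> forall u d : 'I_x.+1,
  ((u%:Z - d%:Z) * (wins2 d)%:Z <= (u%:Z - (beta u)%:Z) * (wins2 (beta u))%:Z)%R.
Proof.
move=> br u d; have := br (fun w => if w == u then d else beta w).
rewrite /exp_payoff (bigD1 u) //= [X in _ <= X](bigD1 u) //= eqxx.
rewrite (eq_bigr (fun w => payoff R w (beta w) sigma / x.+1%:R)); last first.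
  by move=> w /negbTE ->.
have inv_pos : 0 < (x.+1%:R : R)^-1 by rewrite invr_gt0 ltr0n.
rewrite lerD2r ler_pM2r // /payoff !win_probE !mulrA !ler_pM2r ?invr_gt0 //.
by rewrite -(ler_int R) !rmorphM !rmorphB.
Qed.

Section Gap.
Variables (v c b : 'I_x.+1).
Hypothesis c_lt_b : (c < b)%N.
Hypothesis bid_below : forall w : 'I_x.+1, (w < v)%N -> (sigma w <= c)%N.
Hypothesis bid_above : forall w : 'I_x.+1, (v <= w)%N -> (b <= sigma w)%N.

Ltac weight_by_cases w :=
  case: (ltnP w v) => side;
  [have := bid_below side | have := bid_above side] => bid;
  rewrite /win_weight -?val_eqE /=;
  repeat match goal with |- context [if ?t then _ else _] => case: (boolP t) => ? end;
  rewrite /=; lia.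

Lemma count_values_below : (\sum_(w < x.+1) ((w < v)%N : nat))%N = v.
Proof. by rewrite count_below; have := ltn_ord v; lia. Qed.

Lemma wins2_inside_gap (d : 'I_x.+1) :
  (c < d)%N -> (d < b)%N -> wins2 d = (2 * v)%N.
Proof.
move=> c_d d_b; rewrite /wins2 -count_values_below big_distrr /=.
by apply: eq_bigr => w _; weight_by_cases w.
Qed.

Lemma wins2_low : (wins2 c + ties c)%N = (2 * v)%N.
Proof.
rewrite /wins2 /ties -big_split -count_values_below big_distrr /=.
by apply: eq_bigr => w _; weight_by_cases w.
Qed.

Lemma wins2_high : wins2 b = (2 * v + ties b)%N.
Proof.
rewrite /wins2 /ties -count_values_below big_distrr -big_split /=.
by apply: eq_bigr => w _; weight_by_cases w.
Qed.

Lemma wins2_above_high (d : 'I_x.+1) :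
  (b < d)%N -> (2 * v + 2 * ties b <= wins2 d)%N.
Proof.
move=> b_d; rewrite /wins2 /ties -count_values_below !big_distrr -big_split /=.
by apply: leq_sum => w _; weight_by_cases w.
Qed.

(* All values bidding b lie in [v, t] for the largest such value t. *)
Lemma last_high_bidder : sigma v = b ->
  exists2 t : 'I_x.+1, sigma t = b & (v + ties b <= t.+1)%N.
Proof.
move=> bid_v.
have [t /eqP bid_t t_max] := @arg_maxnP _ v (fun i => sigma i == b)
  (fun i : 'I_x.+1 => i : nat) (introT eqP bid_v).
exists t => //.
have count_t : (\sum_(w < x.+1) ((w < t.+1)%N : nat))%N = t.+1.
  by rewrite count_below; have := ltn_ord t; lia.
rewrite -count_t -count_values_below /ties.
have v_le_t := t_max v (introT eqP bid_v).
rewrite -big_split; apply: leq_sum => w _ /=.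
case: (boolP (sigma w == b)) => [bid_w | _]; last by rewrite addn0; lia.
have := t_max w bid_w; have := @bid_below w; move/eqP: bid_w => -> /=; lia.
Qed.

End Gap.
End WinningWeight.

Section SymmetricBestResponse.
Variables (R : rcfType) (x : nat) (beta : bidfun x).
Hypothesis br : best_response R beta beta.

(* Adding the incentive constraints of u and u' for swapping bids shows
   that a higher value never bids lower. *)
Lemma best_response_monotone (u u' : 'I_x.+1) :
  (u < u')%N -> (beta u <= beta u')%N.
Proof.
move=> u_lt; rewrite leqNgt; apply/negP => bid_gt.
have inc_u := best_response_incentive br u (beta u').
have inc_u' := best_response_incentive br u' (beta u).
have := wins2_lt_of_used bid_gt (erefl (beta u')).
by nia.
Qed.

Lemma no_large_jump (v : 'I_x.+1) (k : nat) :
  (1 <= v)%N -> (2 <= k)%N -> (beta (inord v.-1) + k)%N = beta v -> False.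
Proof.
move=> v_ge1 k_ge2 jump.
set c := beta (inord v.-1) in jump; set b := beta v in jump.
have v_bound := ltn_ord v.
have bid_below (w : 'I_x.+1) : (w < v)%N -> (beta w <= c)%N.
  move=> w_lt; case: (ltnP w v.-1) => w_vm1.
    by apply: best_response_monotone; rewrite inordK; lia.
  by have -> : w = inord v.-1 by apply: val_inj; rewrite /= inordK; lia.
have bid_above (w : 'I_x.+1) : (v <= w)%N -> (b <= beta w)%N.
  rewrite leq_eqVlt => /orP[/eqP v_w | v_lt]; last exact: best_response_monotone.
  by have -> : w = v by apply: val_inj.
have c_lt_b : (c < b)%N by lia.
have [t bid_t t_ge] := last_high_bidder c_lt_b bid_below (erefl b).
have q_ge1 : (1 <= ties beta c)%N.
  by rewrite /ties (bigD1 (inord v.-1)) //= eqxx.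
have p_ge1 : (1 <= ties beta b)%N by rewrite /ties (bigD1 v) //= eqxx.
have c_bound := ltn_ord c; have b_bound := ltn_ord b; have t_bound := ltn_ord t.
have high := wins2_high c_lt_b bid_below bid_above.
have inside := wins2_inside_gap c_lt_b bid_below bid_above.
have low := wins2_low c_lt_b bid_below bid_above.
(* v deviates down to b-1, which lies inside the gap. *)
have down := best_response_incentive br v (inord b.-1).
rewrite -/b high inside ?inordK in down; try lia.
have b_lt_v : (b < v)%N.
  suff : (b%:Z < v%:Z)%R by lia.
  by apply: (@bid_below_value _ _ (ties beta b)); lia.
(* The last value bidding b deviates up to b+1, which beats every value >= v
   bidding b. *)
have up := best_response_incentive br t (inord b.+1).
rewrite bid_t high inordK in up; last by lia.
have up_weight : (2 * v + 2 * ties beta b <= wins2 beta (inord b.+1))%N.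
  by apply: (wins2_above_high c_lt_b bid_below bid_above); rewrite inordK; lia.
have raise := best_response_incentive br (inord v.-1) (inord c.+1).
rewrite -/c inside ?inordK in raise; try lia.
have drop := best_response_incentive br v c.
rewrite -/b high in drop.
have zero_bid : c%:Z = 0 -> (ties beta c)%:Z = v%:Z.
  by move=> c0; move: low; rewrite wins2_zero //; lia.
apply: (@jump_incentives_inconsistent v b c (ties beta b) (ties beta c) t
  (wins2 beta (inord b.+1)) (wins2 beta c)) => //; lia.
Qed.

End SymmetricBestResponse.

Theorem lemma13 (R : rcfType) (x : nat) (beta : bidfun x) :
  symmetric_equilibrium R beta ->
  ~ (exists (v : 'I_x.+1) (k : nat),
       [/\ (1 <= v)%N, (2 <= k)%N,
           (beta (inord v.-1) + k)%N = beta v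
         & (2 - Num.sqrt 3) * (v : nat)%:R <= (beta v : nat)%:R :> R]).
Proof.
move=> [br _ _ _] [v [k [v_ge1 k_ge2 jump _]]].
exact: (no_large_jump br v_ge1 k_ge2 jump).
Qed.
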